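(* Every finitely generated free partially commutative monoid is isomorphic to an automaton semigroup.
   Context: A free partially commutative monoid is a monoid with presentation $\langle X\mid R\rangle$, $X=\{x_1,\dots,x_n\}$ finite, where $R\subseteq\{(x_ix_j,x_jx_i)\}$. A synchronous automaton is $(Q,\Sigma,t,o)$ with $Q$ a finite set of states, $\Sigma$ a finite alphabet, $t:Q\times\Sigma\to Q$ and $o:Q\times\Sigma\to\Sigma$. Each state $q$ induces $q:\Sigma^*\to\Sigma^*$ by $q(\emptyset)=\emptyset$, $q(\sigma w)=o(q,\sigma)\,q'(w)$ with $q'=t(q,\sigma)$. An automaton semigroup is the semigroup of maps $\Sigma^*\to\Sigma^*$ generated under composition by the states of a synchronous automaton. *)

From mathcomp Require Import all_boot.
From Stdlib Require Import Relations.
Set Implicit Arguments. Unset Strict Implicit. Unset Printing Implicit Defensive.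

(* Generators x_0,...,x_{n-1} are the elements of 'I_n; words are seq 'I_n.
   comm i j means the relation (x_i x_j, x_j x_i) belongs to R. *)
Inductive fpc_step (n : nat) (comm : rel 'I_n) : seq 'I_n -> seq 'I_n -> Prop :=
  | FpcStep (u v : seq 'I_n) (a b : 'I_n) :
      comm a b -> fpc_step comm (u ++ a :: b :: v) (u ++ b :: a :: v).

(* The congruence generated by R: the monoid <X | R> is seq 'I_n modulo this
   relation, with concatenation as product and [::] as identity. *)
Definition fpc_equiv (n : nat) (comm : rel 'I_n) : relation (seq 'I_n) :=
  clos_refl_sym_trans _ (fpc_step comm).

Record automaton (Q Sigma : finType) := Automaton {
  trans : Q -> Sigma -> Q;
  out   : Q -> Sigma -> Sigma }.

Fixpoint state_map (Q Sigma : finType) (A : automaton Q Sigma) (q : Q)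
    (w : seq Sigma) : seq Sigma :=
  match w with
  | [::] => [::]
  | s :: w' => out A q s :: state_map A (trans A q s) w'
  end.

(* The composite of the maps of a word of states: [:: q1; ...; qk] acts as
   q1 \o ... \o qk. Elements of the automaton semigroup are exactly the
   maps word_map A p for nonempty p. *)
Definition word_map (Q Sigma : finType) (A : automaton Q Sigma) (p : seq Q) :
    seq Sigma -> seq Sigma :=
  foldr (fun q f => state_map A q \o f) id p.

(* The monoid <X | comm> is isomorphic to the automaton semigroup S(A):
   phi sends a word of generators to a nonempty word of states representing an
   element of S(A); the induced map M -> S(A) is well-defined and injective,
   a homomorphism, and surjective. *)
Definition fpc_iso_automaton_semigroup (n : nat) (comm : rel 'I_n)
    (Q Sigma : finType) (A : automaton Q Sigma) : Prop :=
  exists phi : seq 'I_n -> seq Q,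
    [/\ forall u, phi u != [::],
        forall u v, fpc_equiv comm u v <-> word_map A (phi u) =1 word_map A (phi v),
        forall u v, word_map A (phi (u ++ v)) =1 word_map A (phi u) \o word_map A (phi v)
      & forall p : seq Q, p != [::] -> exists u, word_map A (phi u) =1 word_map A p].

(* Traces are encoded as heaps of pieces.  A letter of the alphabet is a row of
   an n-column board, and the state x_i reads a board bottom-up, dropping the
   piece x_i onto the lowest row where every column of a generator not
   commuting with x_i is still empty.  Distinct commuting generators occupy
   disjoint columns, so their state maps commute and the action of the states
   factors through the monoid.  Conversely, a word u applied to a tall enough
   empty board builds the heap of u, whose top-down reading is equivalent to u,
   so the action is faithful.  An extra identity state makes the image of the
   empty word a nonempty word of states. *)

From mathcomp Require Import all_boot.
From Stdlib Require Import Relations.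
Set Implicit Arguments. Unset Strict Implicit. Unset Printing Implicit Defensive.

Lemma word_map_cat (Q Sigma : finType) (A : automaton Q Sigma) (p q : seq Q) :
  word_map A (p ++ q) =1 word_map A p \o word_map A q.
Proof. by elim: p => //= x p IHp w; congr (state_map A x _); apply: IHp. Qed.

Section TraceEquivalence.
Variables (n : nat) (comm : rel 'I_n).
Local Notation equiv := (fpc_equiv comm).

Lemma fpc_equiv_refl u : equiv u u. Proof. exact: rst_refl. Qed.
Lemma fpc_equiv_sym u v : equiv u v -> equiv v u. Proof. exact: rst_sym. Qed.
Lemma fpc_equiv_trans u v w : equiv u v -> equiv v w -> equiv u w.
Proof. exact: rst_trans. Qed.

Lemma fpc_equiv_cat a b u v : equiv u v -> equiv (a ++ u ++ b) (a ++ v ++ b).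
Proof.
elim=> [_ _ [p q c d cd] | x | x y _ IH | x y z _ IH1 _ IH2].
- by apply: rst_step; move: (FpcStep (a ++ p) (q ++ b) cd); rewrite -!catA.
- exact: fpc_equiv_refl.
- exact: fpc_equiv_sym.
- exact: fpc_equiv_trans IH2.
Qed.

Lemma fpc_equiv_cons c u v : equiv u v -> equiv (c :: u) (c :: v).
Proof. by move/(fpc_equiv_cat [:: c] [::]); rewrite !cats0. Qed.

Lemma fpc_equiv_catl a u v : equiv u v -> equiv (a ++ u) (a ++ v).
Proof. by move/(fpc_equiv_cat a [::]); rewrite !cats0. Qed.

Lemma fpc_equiv_catr b u v : equiv u v -> equiv (u ++ b) (v ++ b).
Proof. exact: (fpc_equiv_cat [::] b). Qed.

Definition commutes a b := comm a b || comm b a.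

Lemma commutesC a b : commutes a b = commutes b a.
Proof. by rewrite /commutes orbC. Qed.

Lemma fpc_equiv_swap a b t : commutes a b -> equiv (a :: b :: t) (b :: a :: t).
Proof.
case/orP=> ab; first exact/rst_step/(FpcStep [::] t ab).
exact/rst_sym/rst_step/(FpcStep [::] t ab).
Qed.

Lemma fpc_equiv_move i s t : all (commutes i) s -> equiv (s ++ i :: t) (i :: s ++ t).
Proof.
elim: s => [|x s IHs] /=; first by move=> _; apply: fpc_equiv_refl.
case/andP=> ix /IHs/(fpc_equiv_cons x) /fpc_equiv_trans; apply.
by apply: fpc_equiv_swap; rewrite commutesC.
Qed.

Lemma fpc_equiv_filter_predU1 i (P : pred 'I_n) r :
    uniq r -> i \in r -> ~~ P i -> all (commutes i) (filter P r) ->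
  equiv (filter (predU1 i P) r) (i :: filter P r).
Proof.
move=> uniq_r i_r nPi; case/splitPr: i_r uniq_r => r1 r2.
rewrite cat_uniq /= negb_or => /and3P [_ /andP [i_r1 _] /andP [i_r2 _]].
have filter_neq s : i \notin s -> filter (predU1 i P) s = filter P s.
  move=> i_s; apply: eq_in_filter => x xs.
  by rewrite /= (negbTE (memPn i_s x xs)).
rewrite !filter_cat /= eqxx (negbTE nPi) !filter_neq // all_cat => /andP [comm_r1 _].
exact: fpc_equiv_move.
Qed.

End TraceEquivalence.

Section HeapAutomaton.
Variables (n : nat) (comm : rel 'I_n).
Local Notation equiv := (fpc_equiv comm).
Local Notation commutes := (commutes comm).

(* A cell is empty ([None]), holds a piece ([Some true]) or a filler
   ([Some false]); fillers occupy the column of a piece on the rows it falls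
   through, so that every column stays filled up to its height. *)
Definition row := {ffun 'I_n -> option bool}.

Definition blank : row := [ffun=> None].

Definition blocks i j := (j == i) || ~~ commutes i j.

Definition fits i (c : row) := [forall j, blocks i j ==> (c j == None)].

Definition drop_piece i (c : row) : row :=
  [ffun j => if j == i then Some (fits i c || (c i == Some true)) else c j].

Definition heap_automaton : automaton (option 'I_n) row :=
  Automaton (fun q c => if q is Some i then (if fits i c then None else q) else None)
            (fun q c => if q is Some i then drop_piece i c else c).

Local Notation A := heap_automaton.

Lemma blocksC a b : blocks a b = blocks b a.
Proof. by rewrite /blocks eq_sym commutesC. Qed.

Lemma state_map_None w : state_map A None w = w.
Proof. by elim: w => //= c w ->. Qed.

Lemma state_map_Some i c C : state_map A (Some i) (c :: C) =
  drop_piece i c :: (if fits i c then C else state_map A (Some i) C).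
Proof. by rewrite /=; case: (fits i c); rewrite ?state_map_None. Qed.

Lemma fits_drop_piece a b c : ~~ blocks a b -> fits a (drop_piece b c) = fits a c.
Proof.
move=> ab; apply: eq_forallb => j; rewrite ffunE.
by case: (eqVneq j b) => // ->; rewrite (negbTE ab).
Qed.

Lemma drop_pieceC a b c : ~~ blocks a b ->
  drop_piece a (drop_piece b c) = drop_piece b (drop_piece a c).
Proof.
move=> ab; have ba : ~~ blocks b a by rewrite blocksC.
have neq_ba : b != a by move: ab; rewrite /blocks negb_or => /andP [].
have neq_ab : a != b by rewrite eq_sym.
apply/ffunP=> j; rewrite !ffunE !fits_drop_piece //.
case: (eqVneq j a) => [->|_]; first by rewrite (negbTE neq_ab).
by case: (eqVneq j b) => [_|//]; rewrite (negbTE neq_ba).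
Qed.

Lemma state_map_commute a b : ~~ blocks a b ->
  state_map A (Some a) \o state_map A (Some b) =1
  state_map A (Some b) \o state_map A (Some a).
Proof.
move=> ab w /=; have ba : ~~ blocks b a by rewrite blocksC.
suff gen (x y : bool) : state_map A (if x then Some a else None)
      (state_map A (if y then Some b else None) w) =
    state_map A (if y then Some b else None)
      (state_map A (if x then Some a else None) w) by exact: gen true true.
elim: w x y => [|c w IHw] [] []; rewrite /= ?state_map_None //.
rewrite !fits_drop_piece // drop_pieceC //; congr (_ :: _).
by move: (IHw (~~ fits a c) (~~ fits b c)); case: (fits a c); case: (fits b c).
Qed.

Lemma word_map_fpc_equiv u v : equiv u v ->
  word_map A (map Some u) =1 word_map A (map Some v).
Proof.
elim=> [_ _ [p q a b ab] w | // | x y _ IH w | x y z _ IH1 _ IH2 w].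
- rewrite !map_cat !word_map_cat /=; congr (word_map _ _ _).
  have [->|neq_ab] := eqVneq a b; first by [].
  apply: state_map_commute.
  by rewrite /blocks eq_sym negb_or neq_ab negbK /commutes ab.
- by rewrite IH.
- by rewrite IH1 IH2.
Qed.

Definition pieces (c : row) : seq 'I_n := [seq j <- enum 'I_n | c j == Some true].

(* A board lists its rows bottom-up; its heap word is read from the top row down. *)
Fixpoint heap_word (C : seq row) : seq 'I_n :=
  if C is c :: C' then heap_word C' ++ pieces c else [::].

Fixpoint stacked (C : seq row) : bool :=
  if C is c :: C' then
    [forall j, (c j == None) ==> all (fun d : row => d j == None) C'] && stacked C'
  else true.

Lemma column_state_map i j C : j != i ->
  map (fun d : row => d j) (state_map A (Some i) C) = map (fun d : row => d j) C.
Proof.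
move=> ji; elim: C => [|c C IHC] //; rewrite state_map_Some /= ffunE (negbTE ji).
by case: (fits i c); rewrite ?IHC.
Qed.

Lemma stacked_state_map i C : stacked C -> stacked (state_map A (Some i) C).
Proof.
elim: C => [|c C IHC] //; rewrite state_map_Some /= => /andP [stack_c stack_C].
apply/andP; split; last by case: (fits i c); rewrite ?IHC.
apply/forallP=> j; rewrite ffunE; case: (eqVneq j i) => [//|ji].
apply/implyP=> /(implyP (forallP stack_c j)); case: (fits i c) => //.
by rewrite -!(all_map (fun d : row => d j) (pred1 None)) column_state_map.
Qed.

Lemma drop_piece_neq_blank i c : drop_piece i c != blank.
Proof. by apply/eqP=> /ffunP /(_ i); rewrite !ffunE eqxx. Qed.

Lemma fits_blank i : fits i blank.
Proof. by apply/forallP=> j; rewrite ffunE implybT. Qed.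

Lemma count_blank_state_map i C :
  count_mem blank C <= (count_mem blank (state_map A (Some i) C)).+1.
Proof.
elim: C => [|c C IHC] //; rewrite state_map_Some /= (negbTE (drop_piece_neq_blank i c)).
have [fit_c|nfit_c] := boolP (fits i c); first by case: (c == blank).
suff -> : (c == blank) = false by [].
by apply: contraNF nfit_c => /eqP ->; apply: fits_blank.
Qed.

Lemma pieces_commute i d : fits i d -> all (commutes i) (pieces d).
Proof.
move/forallP=> fit; apply/allP=> j; rewrite mem_filter => /andP [dj _].
apply: contraLR (fit j) => nij.
by rewrite /blocks (negbTE nij) orbT (eqP dj).
Qed.

Lemma heap_word_commute i C : all (fits i) C -> all (commutes i) (heap_word C).
Proof.
elim: C => [|c C IHC] //= /andP [fit_c fit_C].
by rewrite all_cat IHC ?pieces_commute.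
Qed.

Lemma pieces_drop_piece_nofit i c : ~~ fits i c -> pieces (drop_piece i c) = pieces c.
Proof.
move=> nfit; apply: eq_filter => j; rewrite ffunE.
by case: (eqVneq j i) => [->|//]; rewrite (negbTE nfit); case: (c i) => [[]|].
Qed.

Lemma pieces_drop_piece_fit i c : fits i c -> equiv (pieces (drop_piece i c)) (i :: pieces c).
Proof.
move=> fit; have ci : c i = None by apply/eqP; move/forallP/(_ i): fit; rewrite /blocks eqxx.
have -> : pieces (drop_piece i c) =
    filter (predU1 i (fun j => c j == Some true)) (enum 'I_n).
  by apply: eq_filter => j; rewrite ffunE /=; case: (eqVneq j i) => [->|]; rewrite ?fit.
apply: fpc_equiv_filter_predU1; rewrite ?enum_uniq ?mem_enum ?ci //.
exact: pieces_commute.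
Qed.

Lemma heap_word_state_map i C : stacked C -> blank \in C ->
  equiv (heap_word (state_map A (Some i) C)) (i :: heap_word C).
Proof.
elim: C => [|c C IHC] //; rewrite state_map_Some /= => /andP [stack_c stack_C].
have [fit_c _|nfit_c] := boolP (fits i c).
  apply: fpc_equiv_trans (fpc_equiv_catl _ (pieces_drop_piece_fit fit_c)) _.
  apply/fpc_equiv_move/heap_word_commute/allP=> d dC.
  apply/forallP=> j; apply/implyP=> ij.
  move/forallP/(_ j): fit_c; rewrite ij => /(implyP (forallP stack_c j)).
  by move/allP/(_ d dC).
rewrite in_cons pieces_drop_piece_nofit // -cat_cons.
case: (eqVneq blank c) => [bc|_ blank_C]; first by rewrite -bc fits_blank in nfit_c.
exact/fpc_equiv_catr/IHC.
Qed.

(* Each drop uses up at most one empty row, so [size u] empty rows suffice. *)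
Lemma heap_word_word_map u C : stacked C -> size u <= count_mem blank C ->
  [/\ stacked (word_map A (map Some u) C),
      count_mem blank C - size u <= count_mem blank (word_map A (map Some u) C)
    & equiv (heap_word (word_map A (map Some u) C)) (u ++ heap_word C)].
Proof.
move=> stack_C; elim: u => [|a u IHu] /= size_u.
  by rewrite subn0; split=> //; apply: fpc_equiv_refl.
have [stack_uC count_uC heap_uC] := IHu (ltnW size_u).
split; first exact: stacked_state_map.
  by rewrite subnS -subn1 leq_subLR add1n (leq_trans count_uC) ?count_blank_state_map.
apply: fpc_equiv_trans (heap_word_state_map a stack_uC _) (fpc_equiv_cons a heap_uC).
by rewrite -has_pred1 has_count (leq_trans _ count_uC) ?subn_gt0.
Qed.

Lemma stacked_blanks L : stacked (nseq L blank).
Proof.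
elim: L => //= L ->; rewrite andbT; apply/forallP=> j; apply/implyP=> _.
by apply/allP=> d /nseqP [-> _]; rewrite ffunE.
Qed.

Lemma heap_word_blanks L : heap_word (nseq L blank) = [::].
Proof.
elim: L => //= L ->; rewrite cat0s /pieces -(filter_pred0 (enum 'I_n)).
by apply: eq_filter => j; rewrite ffunE.
Qed.

Lemma fpc_equiv_word_map u v :
  word_map A (map Some u) =1 word_map A (map Some v) -> equiv u v.
Proof.
move=> uv; set L := size u + size v.
have heap_of w : size w <= L ->
    equiv (heap_word (word_map A (map Some w) (nseq L blank))) w.
  move=> size_w; have [|_ _] := heap_word_word_map (u := w) (stacked_blanks L).
    by rewrite count_nseq /= eqxx mul1n.
  by rewrite heap_word_blanks cats0; apply.
apply: fpc_equiv_trans (fpc_equiv_sym (heap_of u (leq_addr _ _))) _.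
by rewrite uv; apply: heap_of; rewrite leq_addl.
Qed.

Lemma word_map_pmap p : word_map A (map Some (pmap id p)) =1 word_map A p.
Proof.
elim: p => [|[a|] p IHp] w //=; last by rewrite state_map_None IHp.
by rewrite IHp.
Qed.

End HeapAutomaton.

Theorem mainTheorem19 :
  forall (n : nat) (comm : rel 'I_n),
    exists (Q Sigma : finType) (A : automaton Q Sigma),
      fpc_iso_automaton_semigroup comm A.
Proof.
move=> n comm; exists (option 'I_n), (row n), (heap_automaton comm).
exists (fun u => None :: map Some u); split=> // [u v | u v w | p _].
- split=> [uv w | uv]; first by rewrite /= !state_map_None (word_map_fpc_equiv uv).
  by apply: fpc_equiv_word_map => w; move: (uv w); rewrite /= !state_map_None.
- by rewrite /= !state_map_None map_cat word_map_cat.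
- by exists (pmap id p) => w; rewrite /= state_map_None word_map_pmap.
Qed.
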